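(* Let $f:\mathbb{R}^n\to\mathbb{R}$ be differentiable and pseudo-convex, with $\nabla f$ $L$-Lipschitz continuous ($L>0$), and assume the stationary set $X^*$ is non-empty. Let $0<h<\frac{1}{L}$, $\beta\in\left(\frac{1-\sqrt{1-h^2L^2}}{h^2L^2},1\right]$ and $\kappa_1=2\beta-1-\beta^2h^2L^2$. Then the sequence $\{x^k\}$ generated by Algorithm 1 satisfies, for every $x^*\in X^*$ and every integer $K\ge1$, $$\frac{1}{K}\sum_{k=0}^{K-1}\|\nabla f(x^k)\|^2\le \frac{\|x^0-x^*\|^2}{K\kappa_1h^2}.$$
   Context: A differentiable $f$ is pseudo-convex if $\nabla f$ is pseudo-monotone, i.e. for all $x,y$, $\langle \nabla f(x),y-x\rangle\ge 0$ implies $\langle \nabla f(y),y-x\rangle\ge0$. The stationary set is $X^*=\{x\in\mathbb{R}^n:\nabla f(x)=0\}$. Algorithm 1: given $x^0$, for $k=0,1,2,\dots$ set $z^k=x^k-h\nabla f(x^k)$ and $x^{k+1}=x^k-h\big(\nabla f(x^k)-\beta(\nabla f(x^k)-\nabla f(z^k))\big)$. *)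

From HB Require Import structures.
From mathcomp Require Import all_boot all_order all_algebra.
From mathcomp Require Import all_classical all_reals all_analysis.
Set Implicit Arguments. Unset Strict Implicit. Unset Printing Implicit Defensive.
Import Order.TTheory GRing.Theory Num.Theory.
Import numFieldNormedType.Exports.
Local Open Scope ring_scope.

Definition dotv {R : realType} {n : nat} (u v : 'rV[R]_n) : R :=
  \sum_(i < n) u ord0 i * v ord0 i.
Definition enorm {R : realType} {n : nat} (u : 'rV[R]_n) : R :=
  Num.sqrt (dotv u u).

Definition grad {R : realType} {n : nat} (f : 'rV[R]_n -> R) (x : 'rV[R]_n)
  : 'rV[R]_n := \row_(i < n) ('d f x (\row_(j < n) (i == j)%:R)).

Definition pseudo_monotone {R : realType} {n : nat} (F : 'rV[R]_n -> 'rV[R]_n)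
  : Prop :=
  forall x y, 0 <= dotv (F x) (y - x) -> 0 <= dotv (F y) (y - x).

Definition pseudo_convex {R : realType} {n : nat} (f : 'rV[R]_n -> R) : Prop :=
  (forall x, differentiable f x) /\ pseudo_monotone (grad f).

Definition stationary_set {R : realType} {n : nat} (f : 'rV[R]_n -> R)
  : set 'rV[R]_n := [set x | grad f x = 0].

Fixpoint alg1 {R : realType} {n : nat} (f : 'rV[R]_n -> R) (h beta : R)
  (x0 : 'rV[R]_n) (k : nat) : 'rV[R]_n :=
  match k with
  | O => x0
  | S k' =>
      let x := alg1 f h beta x0 k' in
      let z := x - h *: grad f x in
      x - h *: (grad f x - beta *: (grad f x - grad f z))
  end.

From HB Require Import structures.
From mathcomp Require Import all_boot all_order all_algebra.
From mathcomp Require Import all_classical all_reals all_analysis.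
From mathcomp Require Import ring lra.
Set Implicit Arguments. Unset Strict Implicit. Unset Printing Implicit Defensive.
Import Order.TTheory GRing.Theory Num.Theory.
Import numFieldNormedType.Exports.
Local Open Scope ring_scope.

(* Fejer-type descent.  Write the step as x - h (g + beta e) with g = F x and
   e = F z - F x, z = x - h g.  Pseudo-monotonicity at a zero x* of F gives
   <g, x - x*> >= 0 and <F z, z - x*> >= 0, and the Lipschitz bound gives
   |e| <= h L |g|; expanding the square yields
   |x+ - x*|^2 <= |x - x*|^2 - kappa1 h^2 |g|^2.  The condition on beta is
   exactly what makes kappa1 positive, and telescoping concludes. *)

Section InnerProduct.
Variables (R : realType) (n : nat).
Implicit Types (u v w : 'rV[R]_n) (a : R).

Lemma dotvC u v : dotv u v = dotv v u.
Proof. by apply: eq_bigr => i _; rewrite mulrC. Qed.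

Lemma dotvDl u v w : dotv (u + v) w = dotv u w + dotv v w.
Proof. by rewrite /dotv -big_split; apply: eq_bigr => i _; rewrite mxE mulrDl. Qed.

Lemma dotvZl a u v : dotv (a *: u) v = a * dotv u v.
Proof. by rewrite /dotv mulr_sumr; apply: eq_bigr => i _; rewrite mxE mulrA. Qed.

Lemma dotvNl u v : dotv (- u) v = - dotv u v.
Proof. by rewrite -scaleN1r dotvZl mulN1r. Qed.

Lemma dotvDr u v w : dotv w (u + v) = dotv w u + dotv w v.
Proof. by rewrite dotvC dotvDl !(dotvC w). Qed.

Lemma dotvZr a u v : dotv v (a *: u) = a * dotv v u.
Proof. by rewrite dotvC dotvZl dotvC. Qed.

Lemma dotvNr u v : dotv v (- u) = - dotv v u.
Proof. by rewrite dotvC dotvNl dotvC. Qed.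

Lemma dotv0l v : dotv 0 v = 0.
Proof. by rewrite -(scale0r 0) dotvZl mul0r. Qed.

Lemma dotv_ge0 u : 0 <= dotv u u.
Proof. by apply: sumr_ge0 => i _; rewrite -expr2 sqr_ge0. Qed.

Lemma enorm_sq u : enorm u ^+ 2 = dotv u u.
Proof. by rewrite /enorm sqr_sqrtr // dotv_ge0. Qed.

Lemma enorm_ge0 u : 0 <= enorm u.
Proof. exact: sqrtr_ge0. Qed.

Lemma enormZ_sq a u : enorm (a *: u) ^+ 2 = a ^+ 2 * dotv u u.
Proof. by rewrite enorm_sq dotvZl dotvZr mulrA -expr2. Qed.

Lemma dotv_step_sq_le (p g e : 'rV[R]_n) (h beta L : R) :
  0 < h -> 0 <= beta -> beta <= 1 ->
  0 <= dotv g p -> 0 <= dotv (g + e) (p - h *: g) ->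
  dotv e e <= L ^+ 2 * h ^+ 2 * dotv g g ->
  dotv (p - h *: (g + beta *: e)) (p - h *: (g + beta *: e))
  <= dotv p p - (2 * beta - 1 - beta ^+ 2 * h ^+ 2 * L ^+ 2) * h ^+ 2 * dotv g g.
Proof.
move=> h0 b0 b1 gp_ge0 gep_ge0 ee_le.
rewrite !(dotvDl, dotvDr, dotvNl, dotvNr, dotvZl, dotvZr) in gep_ge0 *.
rewrite (dotvC p g) (dotvC p e) (dotvC e g) in gep_ge0 *.
set gp := dotv g p in gp_ge0 gep_ge0 *; set ep := dotv e p in gep_ge0 *.
set gg := dotv g g in gep_ge0 ee_le *; set ge := dotv g e in gep_ge0 *.
set ee := dotv e e in ee_le *.
(* the slack in the claim is a combination of these three nonnegative terms *)
have t1 : 0 <= 2 * h * beta * (gp + ep - h * gg - h * ge).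
  by apply: mulr_ge0; [apply: mulr_ge0 => //; lra | lra].
have t2 : 0 <= 2 * h * (1 - beta) * gp.
  by apply: mulr_ge0 => //; apply: mulr_ge0; lra.
have t3 : 0 <= h ^+ 2 * beta ^+ 2 * (L ^+ 2 * h ^+ 2 * gg - ee).
  by apply: mulr_ge0; [apply: mulr_ge0; apply: sqr_ge0 | lra].
nra.
Qed.

End InnerProduct.

Lemma extragradient_dist_sq_le (R : realType) (n : nat)
    (F : 'rV[R]_n -> 'rV[R]_n) (L h beta : R) (y xs : 'rV[R]_n) :
  pseudo_monotone F -> F xs = 0 ->
  (forall x y, enorm (F x - F y) <= L * enorm (x - y)) ->
  0 < L -> 0 < h -> 0 <= beta -> beta <= 1 ->
  dotv (y - h *: (F y - beta *: (F y - F (y - h *: F y))) - xs)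
       (y - h *: (F y - beta *: (F y - F (y - h *: F y))) - xs) <=
  dotv (y - xs) (y - xs)
   - (2 * beta - 1 - beta ^+ 2 * h ^+ 2 * L ^+ 2) * h ^+ 2 * dotv (F y) (F y).
Proof.
move=> pm Fxs0 Lip L0 h0 b0 b1; set z := y - h *: F y.
have -> : y - h *: (F y - beta *: (F y - F z)) - xs
          = (y - xs) - h *: (F y + beta *: (F z - F y)).
  by rewrite -[F y - F z]opprB scalerN opprK addrAC.
have mono_at u : 0 <= dotv (F u) (u - xs).
  by apply: pm; rewrite Fxs0 dotv0l.
apply: dotv_step_sq_le; rewrite ?mono_at //.
- by rewrite addrC subrK -addrAC; apply: mono_at.
- rewrite -enorm_sq.
  have zy : z - y = (- h) *: F y by rewrite /z addrAC subrr add0r scaleNr.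
  have Lz := Lip z y; rewrite zy in Lz.
  apply: (le_trans (lerXn2r 2 _ _ Lz)); rewrite ?nnegrE ?enorm_ge0 //.
    by rewrite mulr_ge0 ?enorm_ge0 ?ltW.
  by rewrite exprMn enormZ_sq sqrrN mulrA.
Qed.

Lemma kappa1_gt0 (R : rcfType) (L h beta : R) :
  0 < L -> 0 < h -> h < L^-1 ->
  (1 - Num.sqrt (1 - h ^+ 2 * L ^+ 2)) / (h ^+ 2 * L ^+ 2) < beta ->
  beta <= 1 ->
  0 < beta /\ 0 < 2 * beta - 1 - beta ^+ 2 * h ^+ 2 * L ^+ 2.
Proof.
move=> L0 h0 hL beta_gt beta_le1.
have hL1 : h * L < 1 by rewrite -(mulVf (lt0r_neq0 L0)) ltr_pM2r.
set a := h ^+ 2 * L ^+ 2 in beta_gt *.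
have a0 : 0 < a by rewrite /a mulr_gt0 ?exprn_gt0.
have hL0 : 0 < h * L by apply: mulr_gt0.
have a1 : a < 1 by rewrite /a -exprMn; nra.
set s := Num.sqrt (1 - a) in beta_gt.
have s0 : 0 <= s by apply: sqrtr_ge0.
have s2 : s ^+ 2 = 1 - a by rewrite sqr_sqrtr //; lra.
have s1 : s < 1 by nra.
have {}beta_gt : 1 - s < beta * a by rewrite -ltr_pdivrMr.
have beta0 : 0 < beta by nra.
split=> //.
(* a * kappa1 = s^2 - (a beta - 1)^2, and |a beta - 1| < s *)
rewrite -[_ * L ^+ 2]mulrA -/a.
have -> : 2 * beta - 1 - beta ^+ 2 * a = (s ^+ 2 - (a * beta - 1) ^+ 2) / a.
  by rewrite s2; field; rewrite lt0r_neq0.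
apply: divr_gt0 => //.
have u1 : 0 < s + (a * beta - 1) by rewrite mulrC; lra.
have u2 : a * beta <= a by rewrite ler_piMr // ltW.
have -> : s ^+ 2 - (a * beta - 1) ^+ 2 = (s + (a * beta - 1)) * (s - (a * beta - 1)).
  by ring.
by apply: mulr_gt0 => //; lra.
Qed.

Lemma average_le_of_descent (R : realFieldType) (D G : nat -> R) (c : R) (K : nat) :
  0 < c -> (0 < K)%N -> (forall k, D k.+1 <= D k - c * G k) -> 0 <= D K ->
  K%:R^-1 * \sum_(k < K) G k <= D 0%N / (K%:R * c).
Proof.
move=> c0 K0 descent DK0.
have telescope m : c * \sum_(k < m) G k + D m <= D 0%N.
  elim: m => [|m IH]; first by rewrite big_ord0 mulr0 add0r.
  by rewrite big_ord_recr /=; have := descent m; lra.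
have K0r : 0 < K%:R :> R by rewrite ltr0n.
rewrite ler_pdivlMr ?mulr_gt0 //.
have -> : K%:R^-1 * (\sum_(k < K) G k) * (K%:R * c) = c * \sum_(k < K) G k.
  by field; rewrite lt0r_neq0.
by have := telescope K; lra.
Qed.

Theorem theorem2 (R : realType) (n : nat) (f : 'rV[R]_n -> R) (L h beta : R)
  (x0 : 'rV[R]_n) :
  (forall x, differentiable f x) ->
  pseudo_convex f ->
  0 < L ->
  (forall x y, enorm (grad f x - grad f y) <= L * enorm (x - y)) ->
  (exists x, x \in stationary_set f) ->
  0 < h -> h < L^-1 ->
  (1 - Num.sqrt (1 - h ^+ 2 * L ^+ 2)) / (h ^+ 2 * L ^+ 2) < beta ->
  beta <= 1 ->
  let kappa1 := 2 * beta - 1 - beta ^+ 2 * h ^+ 2 * L ^+ 2 in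
  forall xs : 'rV[R]_n, xs \in stationary_set f ->
  forall K : nat, (1 <= K)%N ->
    K%:R^-1 * \sum_(k < K) enorm (grad f (alg1 f h beta x0 k)) ^+ 2
      <= enorm (x0 - xs) ^+ 2 / (K%:R * kappa1 * h ^+ 2).
Proof.
move=> _ [_ pm] L0 Lip _ h0 hL beta_gt beta_le1 kappa1 xs.
rewrite inE => /= grad_xs K K0.
have [beta0 kappa0] := kappa1_gt0 L0 h0 hL beta_gt beta_le1.
set x := alg1 f h beta x0.
set D := fun k => dotv (x k - xs) (x k - xs).
set G := fun k => dotv (grad f (x k)) (grad f (x k)).
have descent k : D k.+1 <= D k - kappa1 * h ^+ 2 * G k.
  exact: (extragradient_dist_sq_le (x k) pm grad_xs Lip L0 h0 (ltW beta0) beta_le1).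
have -> : \sum_(k < K) enorm (grad f (x k)) ^+ 2 = \sum_(k < K) G k.
  by apply: eq_bigr => k _; exact: enorm_sq.
rewrite enorm_sq -/(D 0%N) -mulrA.
apply: average_le_of_descent => //; first by rewrite mulr_gt0 ?exprn_gt0.
exact: dotv_ge0.
Qed.
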